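(* Assume $C\succ 0$ and $A_1,\dots,A_m$ are linearly independent. Let $X(t)$ be a differentiable solution of the second-ansatz dynamics $$\mathrm{vec}(\dot X) = -\bigl(I - G\mathcal{A}^T(\mathcal{A}G\mathcal{A}^T)^{-1} \mathcal{A}\bigr)G\,\mathrm{vec}(C),\qquad G=X\otimes X.$$ Then at any time $t$ with $X(t)\succ 0$, $$\frac{d}{dt}\ln\det X(t) \ \ge\ -\sqrt{n}\,\mathrm{tr}(CX(t)).$$
   Context: $C,A_1,\dots,A_m$ are symmetric $n\times n$ matrices and $b\in\mathbb{R}^m$. For an $n\times n$ matrix $M$, $\mathrm{vec}(M)\in\mathbb{R}^{n^2}$ is obtained by stacking the columns of $M$; $\otimes$ is the Kronecker product. $\mathcal{A}$ is the $m\times n^2$ matrix whose $\ell$-th row is $\mathrm{vec}(A_\ell)^T$. *)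

From HB Require Import structures.
From mathcomp Require Import all_boot all_order all_algebra.
From mathcomp Require Import all_classical all_reals all_analysis.
Set Implicit Arguments. Unset Strict Implicit. Unset Printing Implicit Defensive.
Import Order.TTheory GRing.Theory Num.Theory.
Local Open Scope ring_scope.

(* Index arithmetic for 'I_(n*n): k = q*n + r with r = k %% n, q = k %/ n (0-based). *)
Lemma vec_row_lt (n : nat) (k : 'I_(n * n)) : (k %% n < n)%N.
Proof.
case: n k => [|n] k; first by case: k.
by rewrite ltn_pmod.
Qed.

Lemma vec_col_lt (n : nat) (k : 'I_(n * n)) : (k %/ n < n)%N.
Proof.
case: n k => [|n] k; first by case: k.
by rewrite ltn_divLR.
Qed.

Definition vrow (n : nat) (k : 'I_(n * n)) : 'I_n := Ordinal (vec_row_lt k).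
Definition vcol (n : nat) (k : 'I_(n * n)) : 'I_n := Ordinal (vec_col_lt k).

(* vec(M): stacking the columns of M; entry number j*n+i (0-based) is M i j. *)
Definition vec (R : pzRingType) (n : nat) (M : 'M[R]_n) : 'cV[R]_(n * n) :=
  \col_k M (vrow k) (vcol k).

(* Kronecker product: (A ⊗ B)_{(p n + q),(p' n + q')} = A p p' * B q q'. *)
Definition kron (R : pzRingType) (n : nat) (A B : 'M[R]_n) : 'M[R]_(n * n) :=
  \matrix_(k, l) (A (vcol k) (vcol l) * B (vrow k) (vrow l)).

Definition calA (R : pzRingType) (m n : nat) (A : 'I_m -> 'M[R]_n) : 'M[R]_(m, n * n) :=
  \matrix_(l, k) vec (A l) k 0.

Definition posdef (R : numDomainType) (n : nat) (M : 'M[R]_n) : Prop :=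
  M^T = M /\ forall v : 'cV[R]_n, v != 0 -> 0 < (v^T *m M *m v) 0 0.

Definition mxderiv (R : realType) (n : nat) (X : R -> 'M[R]_n) (t : R) : 'M[R]_n :=
  \matrix_(i, j) derive1 (fun s => X s i j) t.

Definition mxderivable (R : realType) (n : nat) (X : R -> 'M[R]_n) (t : R) : Prop :=
  forall i j, derivable (fun s => X s i j) t 1.

Definition ansatz2_rhs (R : realType) (m n : nat) (C : 'M[R]_n) (A : 'I_m -> 'M[R]_n)
  (Xt : 'M[R]_n) : 'cV[R]_(n * n) :=
  let G := kron Xt Xt in
  let cA := calA A in
  - ((1%:M - G *m cA^T *m invmx (cA *m G *m cA^T) *m cA) *m G *m vec C).

(** Jacobi's formula turns [d/dt ln det X] into [tr (X^-1 X')] = [<vec X^-1, vec X'>],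
    and the dynamics give [vec X' = - H vec C] with
    [H = G - G A^T (A G A^T)^-1 A G], [G = X (x) X].  Writing [P] for the
    [G]-orthogonal projection onto the range of [A^T], [H = (1 - P)^T G (1 - P)]
    and [G - H = P^T G P], so [0 <= H <= G] as quadratic forms.  Cauchy-Schwarz
    for [H] then bounds [<vec X^-1, H vec C>] by
    [sqrt (<vec X^-1, G vec X^-1> <vec C, G vec C>) = sqrt (n tr (C X C X))],
    and [tr (C X C X) = tr (K^2) <= (tr K)^2 = tr (C X)^2] for the positive
    semidefinite [K = L^T C L], where [X = L L^T] is a Cholesky factorization. *)

From HB Require Import structures.
From mathcomp Require Import all_boot all_order all_algebra.
From mathcomp Require Import all_classical all_reals all_analysis.
From mathcomp Require Import zify ring lra.
From mathcomp Require Import perm.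
Import Order.TTheory GRing.Theory Num.Theory.
Local Open Scope ring_scope.
Set Implicit Arguments. Unset Strict Implicit. Unset Printing Implicit Defensive.

(** * Vectorization and Kronecker products *)

Section VecIndex.
Variable n : nat.

Lemma vidx_lt (i j : 'I_n) : (j * n + i < n * n)%N.
Proof. have := ltn_ord i; have := ltn_ord j; nia. Qed.

Definition vidx (i j : 'I_n) : 'I_(n * n) := Ordinal (vidx_lt i j).

Lemma vrow_vidx i j : vrow (vidx i j) = i.
Proof. by apply: val_inj; rewrite /= modnMDl modn_small. Qed.

Lemma vcol_vidx i j : vcol (vidx i j) = j.
Proof.
apply: val_inj; have n_gt0 : (0 < n)%N by case: n i {j} => [[]|].
by rewrite /= divnMDl // divn_small // addn0.
Qed.

Lemma vidxK k : vidx (vrow k) (vcol k) = k.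
Proof. by apply: val_inj; rewrite /= -divn_eq. Qed.

Lemma big_vidx (M : nmodType) (F : 'I_(n * n) -> M) :
  \sum_k F k = \sum_i \sum_j F (vidx i j).
Proof.
rewrite pair_big (reindex (fun p : 'I_n * 'I_n => vidx p.1 p.2)) //=.
exists (fun k => (vrow k, vcol k)) => [[i j] _|k _] /=.
  by rewrite vrow_vidx vcol_vidx.
by rewrite vidxK.
Qed.

Lemma vec_surj (R : pzRingType) (v : 'cV[R]_(n * n)) : exists V : 'M[R]_n, vec V = v.
Proof.
exists (\matrix_(i, j) v (vidx i j) 0); apply/matrixP => k z.
by rewrite !mxE vidxK (ord1 z).
Qed.

End VecIndex.

Section VecKron.
Variables (R : comPzRingType) (n : nat).
Implicit Types A B M W Z : 'M[R]_n.

Lemma vec_dot Z W : ((vec Z)^T *m vec W) 0 0 = \tr (Z^T *m W).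
Proof.
rewrite !mxE big_vidx /mxtrace exchange_big /=.
apply: eq_bigr => j _; rewrite mxE; apply: eq_bigr => i _.
by rewrite !mxE vrow_vidx vcol_vidx.
Qed.

Lemma kron_vec A B M : kron A B *m vec M = vec (B *m M *m A^T).
Proof.
apply/matrixP => k z; rewrite !mxE big_vidx exchange_big /=.
apply: eq_bigr => j _; rewrite mxE big_distrl /=; apply: eq_bigr => i _.
by rewrite !mxE vrow_vidx vcol_vidx; ring.
Qed.

Lemma tr_kron A B : (kron A B)^T = kron A^T B^T.
Proof. by apply/matrixP => k l; rewrite !mxE. Qed.

End VecKron.

(** * Bilinear forms *)

Definition bform (R : pzRingType) N (H : 'M[R]_N) (u v : 'cV[R]_N) : R :=
  (u^T *m H *m v) 0 0.

Section BilinearForm.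
Variables (R : comPzRingType) (N : nat) (H : 'M[R]_N).

Lemma bformDr u v w : bform H u (v + w) = bform H u v + bform H u w.
Proof. by rewrite /bform mulmxDr mxE. Qed.

Lemma bformZr u a v : bform H u (a *: v) = a * bform H u v.
Proof. by rewrite /bform -scalemxAr mxE. Qed.

Lemma bformDl u v w : bform H (v + w) u = bform H v u + bform H w u.
Proof. by rewrite /bform linearD /= !mulmxDl mxE. Qed.

Lemma bformZl u a v : bform H (a *: v) u = a * bform H v u.
Proof. by rewrite /bform linearZ /= -!scalemxAl mxE. Qed.

Lemma bformC u v : H^T = H -> bform H u v = bform H v u.
Proof.
move=> sym_H; rewrite /bform -[in LHS](trmxK (u^T *m H *m v)) mxE.
by rewrite !trmx_mul trmxK sym_H mulmxA.
Qed.

Lemma bform_delta i j :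
  bform H (delta_mx i (0 : 'I_1)) (delta_mx j (0 : 'I_1)) = H i j.
Proof. by rewrite /bform trmx_delta -rowE -colE !mxE. Qed.

End BilinearForm.

Lemma bform_congr (R : comPzRingType) N (K B : 'M[R]_N) u v :
  bform (B^T *m K *m B) u v = bform K (B *m u) (B *m v).
Proof. by rewrite /bform trmx_mul !mulmxA. Qed.

Lemma bformB (R : comPzRingType) N (K1 K2 : 'M[R]_N) u v :
  bform (K1 - K2) u v = bform K1 u v - bform K2 u v.
Proof. by rewrite /bform mulmxBr mulmxBl !mxE -sumrB. Qed.

Lemma discriminant_le0 (R : realFieldType) (a b d : R) :
  0 <= a -> 0 <= d -> (forall x, 0 <= a + 2 * x * b + x ^+ 2 * d) ->
  b ^+ 2 <= a * d.
Proof.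
move=> a_ge0 d_ge0 pos.
have [d0|d_neq0] := eqVneq d 0.
  rewrite d0 mulr0; have [->|b_neq0] := eqVneq b 0; first by rewrite expr0n.
  have := pos (- (a + 1) / (2 * b)); rewrite d0 mulr0 addr0.
  have -> : 2 * (- (a + 1) / (2 * b)) * b = - (a + 1) by field; rewrite b_neq0.
  lra.
have := pos (- (b / d)); have : d * (b / d) = b by field.
move: (b / d) => x; nra.
Qed.

Lemma bform_cauchy_schwarz (R : realFieldType) N (H : 'M[R]_N) u v :
  H^T = H -> (forall w, 0 <= bform H w w) ->
  bform H u v ^+ 2 <= bform H u u * bform H v v.
Proof.
move=> sym_H psd_H; apply: discriminant_le0 => // x.
have := psd_H (u + x *: v).
by rewrite !(bformDl, bformDr, bformZl, bformZr) (bformC v u sym_H); nra.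
Qed.

(** * Positive definite matrices *)

Section PosDef.
Variables (R : numFieldType) (N : nat) (H : 'M[R]_N).
Hypothesis H_pd : posdef H.

Lemma posdef_ge0 v : 0 <= bform H v v.
Proof.
have [->|v_neq0] := eqVneq v 0; first by rewrite /bform mulmx0 mxE.
exact/ltW/H_pd.2.
Qed.

Lemma posdef_diag_gt0 i : 0 < H i i.
Proof.
rewrite -bform_delta; apply: H_pd.2.
by apply/eqP => /matrixP/(_ i 0); rewrite !mxE !eqxx => /eqP; rewrite oner_eq0.
Qed.

Lemma posdef_unitmx : H \in unitmx.
Proof.
rewrite unitmxE unitfE; apply/negP => /det0P [v v_neq0 vH0].
have := H_pd.2 v^T; rewrite trmx_eq0 trmxK vH0 mul0mx mxE ltxx.
by move/(_ v_neq0).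
Qed.

End PosDef.

Section SchurComplement.
Variables (R : numFieldType) (n : nat) (X : 'M[R]_(1 + n)).
Hypothesis X_pd : posdef X.

Let a := ulsubmx X 0 0.
Let r := ursubmx X.

Lemma posdef_blockE : ulsubmx X = a%:M /\ dlsubmx X = r^T /\ (drsubmx X)^T = drsubmx X.
Proof.
have := X_pd.1; rewrite -[X in X^T = _]submxK tr_block_mx -{5}[X]submxK.
by case/eq_block_mx => _ _ -> ->; rewrite [ulsubmx X]mx11_scalar.
Qed.

Lemma posdef_corner_gt0 : 0 < a.
Proof. by rewrite /a !mxE; apply: posdef_diag_gt0. Qed.

Lemma posdef_schur : posdef (drsubmx X - a^-1 *: (r^T *m r)).
Proof.
have [ul_a [dl_r sym_D]] := posdef_blockE.
set S := drsubmx X - _.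
split; first by rewrite /S linearB linearZ /= trmx_mul trmxK sym_D.
move=> w w_neq0; set B := r *m w; set Q := w^T *m drsubmx X *m w.
pose x := - (a^-1 * B 0 0).
have := X_pd.2 (col_mx x%:M w); rewrite col_mx_eq0 negb_and w_neq0 orbT => /(_ isT).
have -> : (col_mx x%:M w)^T *m X *m col_mx x%:M w = x *: (x *: a%:M + B^T) + (x *: B + Q).
  rewrite -[X in _ *m X *m _]submxK tr_col_mx mul_row_block mul_row_col tr_scalar_mx ul_a dl_r.
  by rewrite !mul_scalar_mx mul_mx_scalar mulmxDl -scalemxAl /Q /B trmx_mul.
have -> : w^T *m S *m w = Q - a^-1 *: (B^T *m B).
  by rewrite /S mulmxBr mulmxBl -scalemxAr -scalemxAl /B trmx_mul !mulmxA.
have a_neq0 : a != 0 by rewrite gt_eqF ?posdef_corner_gt0.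
rewrite /x; clearbody B Q; rewrite !mxE big_ord1 !mxE /= !mulr1n.
move: (B 0 0) (Q 0 0) => b q.
suff -> : - (a^-1 * b) * (- (a^-1 * b) * a + b) + (- (a^-1 * b) * b + q) =
  q - a^-1 * (b * b) by [].
by field.
Qed.

End SchurComplement.

Lemma cholesky (R : rcfType) n (X : 'M[R]_n) : posdef X -> exists L : 'M[R]_n, X = L *m L^T.
Proof.
elim: n X => [|n IH] X X_pd; first by exists 0; apply/matrixP => [[]].
have [L SLL] := IH _ (@posdef_schur _ n X X_pd).
have [ul_a [dl_r _]] := @posdef_blockE _ n X X_pd.
set a := ulsubmx _ 0 0 in ul_a SLL; set r := ursubmx _ in dl_r SLL.
have a_gt0 : 0 < a := @posdef_corner_gt0 _ n X X_pd.
set s := Num.sqrt a; have ss : s * s = a by rewrite -expr2 sqr_sqrtr ?ltW.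
have s_neq0 : s != 0 by rewrite gt_eqF ?sqrtr_gt0.
pose LX : 'M[R]_(1 + n) := block_mx s%:M 0 (s^-1 *: r^T) L.
exists LX; change (@eq 'M[R]_(1 + n) X (LX *m LX^T)); rewrite /LX.
rewrite tr_block_mx mulmx_block !trmx0 !mulmx0 !addr0 tr_scalar_mx mul0mx addr0.
rewrite linearZ /= trmxK -scalar_mxM ss mul_scalar_mx mul_mx_scalar scalerA.
rewrite -scalemxAl -scalemxAr !scalerA !mulfV // !scale1r -invfM ss -SLL [_ + (_ - _)]addrC subrK.
by rewrite -ul_a -dl_r submxK.
Qed.
Lemma posdef_det_gt0 (R : rcfType) n (X : 'M[R]_n) : posdef X -> 0 < \det X.
Proof.
move=> X_pd; have [L XLL] := cholesky X_pd.
have := posdef_unitmx X_pd; rewrite unitmxE unitfE XLL det_mulmx det_tr -expr2.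
by rewrite lt_def sqr_ge0 andbT.
Qed.

Lemma mxtrace_gram_gt0 (R : realDomainType) n (W : 'M[R]_n) :
  W != 0 -> 0 < \tr (W^T *m W).
Proof.
have gramE : \tr (W^T *m W) = \sum_i \sum_j W j i ^+ 2.
  by apply: eq_bigr => i _; rewrite mxE; apply: eq_bigr => j _; rewrite mxE expr2.
have row_ge0 i : 0 <= \sum_j W j i ^+ 2 by apply: sumr_ge0 => j _; exact: sqr_ge0.
move=> W_neq0; rewrite gramE lt_def sumr_ge0 ?andbT //.
apply: contraNneq W_neq0 => sum0; apply/eqP/matrixP => j i.
have row0 := psumr_eq0P (fun i _ => row_ge0 i) sum0 (i := i) isT.
have /eqP := psumr_eq0P (fun j _ => sqr_ge0 (W j i)) row0 (i := j) isT.
by rewrite sqrf_eq0 mxE => /eqP.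
Qed.

Lemma posdef_kron (R : rcfType) n (X : 'M[R]_n) : posdef X -> posdef (kron X X).
Proof.
move=> X_pd; have [L XLL] := cholesky X_pd.
have L_unit : L \in unitmx.
  by move: (posdef_unitmx X_pd); rewrite XLL unitmx_mul unitmx_tr andbb.
split; first by rewrite tr_kron X_pd.1.
move=> v v_neq0; have [V vecV] := vec_surj v.
have -> : (v^T *m kron X X *m v) 0 0 = \tr ((L^T *m V *m L)^T *m (L^T *m V *m L)).
  rewrite -vecV -mulmxA kron_vec X_pd.1 vec_dot XLL.
  by rewrite !trmx_mul !trmxK !mulmxA mxtrace_mulC !mulmxA.
apply: mxtrace_gram_gt0; apply: contraNneq v_neq0 => LVL0; apply/eqP; rewrite -vecV.
have -> : V = invmx L^T *m (L^T *m V *m L) *m invmx L.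
  by rewrite !mulmxA mulVmx ?unitmx_tr // mul1mx mulmxK.
by rewrite LVL0 mulmx0 mul0mx; apply/matrixP => k z; rewrite !mxE.
Qed.

Lemma calA_tr_inj (R : fieldType) m n (A : 'I_m -> 'M[R]_n) :
  (forall c : 'I_m -> R, \sum_(l < m) c l *: A l = 0 -> forall l, c l = 0) ->
  forall y : 'cV[R]_m, (calA A)^T *m y = 0 -> y = 0.
Proof.
move=> A_free y Ay0; apply/matrixP => l z; rewrite (ord1 z) [RHS]mxE.
apply: (A_free (fun l => y l 0)); apply/matrixP => i j.
have := congr1 (fun M : 'cV[R]_(n * n) => M (vidx i j) 0) Ay0; rewrite !mxE => <-.
rewrite summxE; apply: eq_bigr => k _.
by rewrite !mxE vrow_vidx vcol_vidx mulrC.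
Qed.

(** * The projected form of the dynamics *)

Definition kerproj_form (R : fieldType) N m (G : 'M[R]_N) (cA : 'M[R]_(m, N)) :=
  G - G *m cA^T *m invmx (cA *m G *m cA^T) *m cA *m G.

Section KernelProjection.
Variables (R : realFieldType) (N m : nat) (G : 'M[R]_N) (cA : 'M[R]_(m, N)).
Hypotheses (G_pd : posdef G) (cA_tr_inj : forall y : 'cV[R]_m, cA^T *m y = 0 -> y = 0).

Let M := cA *m G *m cA^T.
Let H := kerproj_form G cA.

Lemma gram_unitmx : M \in unitmx.
Proof.
rewrite unitmxE unitfE; apply/negP => /det0P [y y_neq0 yM0].
suff /cA_tr_inj y0 : cA^T *m y^T = 0 by move: y_neq0; rewrite -trmx_eq0 y0 eqxx.
apply/eqP; apply: contraT => z_neq0; have := G_pd.2 _ z_neq0.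
rewrite trmx_mul !trmxK !mulmxA.
have -> : y *m cA *m G *m cA^T = y *m M by rewrite /M !mulmxA.
by rewrite yM0 mul0mx mxE ltxx.
Qed.

Let M_sym : M^T = M.
Proof. by rewrite /M !trmx_mul trmxK G_pd.1 mulmxA. Qed.

Lemma kerproj_form_sym : H^T = H.
Proof. by rewrite /H linearB /= !trmx_mul !trmxK G_pd.1 trmx_inv M_sym !mulmxA. Qed.

Let P := cA^T *m invmx M *m cA *m G.

Lemma kerproj_formE : H = G - G *m P.
Proof. by rewrite /H /P !mulmxA. Qed.

Lemma projT_mul : P^T *m G = G *m P.
Proof. by rewrite /P !trmx_mul trmxK trmx_inv M_sym G_pd.1 !mulmxA. Qed.

Lemma projT_mul_proj : P^T *m G *m P = G *m P.
Proof.
have foldM k (B : 'M[R]_(m, k)) : cA *m (G *m (cA^T *m B)) = M *m B.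
  by rewrite /M !mulmxA.
by rewrite projT_mul /P -!mulmxA foldM mulKmx ?gram_unitmx.
Qed.

Lemma kerproj_form_ge0 v : 0 <= bform H v v.
Proof.
have -> : H = (1%:M - P)^T *m G *m (1%:M - P).
  rewrite [(1%:M - P)^T]linearB /= trmx1 !(mulmxBl, mulmxBr) !(mul1mx, mulmx1).
  by rewrite projT_mul_proj projT_mul kerproj_formE subrr subr0.
by rewrite bform_congr posdef_ge0.
Qed.

Lemma kerproj_form_le v : bform H v v <= bform G v v.
Proof.
have : bform G v v - bform H v v = bform G (P *m v) (P *m v).
  by rewrite -bform_congr projT_mul_proj kerproj_formE bformB opprB addrC subrK.
by move: (posdef_ge0 G_pd (P *m v)) => ge0 eqGH; rewrite -subr_ge0 eqGH.
Qed.

End KernelProjection.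

Section TraceBounds.
Variables (R : realFieldType) (n : nat) (K : 'M[R]_n).
Hypotheses (K_sym : K^T = K) (K_psd : forall v, 0 <= bform K v v).

Lemma psd_mxtrace_ge0 : 0 <= \tr K.
Proof. by apply: sumr_ge0 => i _; rewrite -bform_delta. Qed.

Lemma psd_mxtrace_sqr_le : \tr (K *m K) <= \tr K ^+ 2.
Proof.
rewrite /mxtrace expr2 mulr_suml; apply: ler_sum => i _.
rewrite mxE mulr_sumr; apply: ler_sum => j _.
have -> : K j i = K i j by rewrite -[in LHS]K_sym mxE.
rewrite -expr2 -!bform_delta.
exact: bform_cauchy_schwarz.
Qed.

End TraceBounds.

Section PosdefProductTrace.
Variables (R : rcfType) (n : nat) (C X : 'M[R]_n).
Hypotheses (C_pd : posdef C) (X_pd : posdef X).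

Lemma posdef_mxtrace_mul_bounds :
  0 <= \tr (C *m X) /\ \tr (C *m X *m C *m X) <= \tr (C *m X) ^+ 2.
Proof.
have [L XLL] := cholesky X_pd; set K := L^T *m C *m L.
have K_sym : K^T = K by rewrite /K !trmx_mul trmxK C_pd.1 mulmxA.
have K_psd v : 0 <= bform K v v by rewrite bform_congr posdef_ge0.
have -> : \tr (C *m X) = \tr K by rewrite XLL /K mulmxA mxtrace_mulC mulmxA.
have -> : \tr (C *m X *m C *m X) = \tr (K *m K).
  by rewrite XLL /K !mulmxA mxtrace_mulC !mulmxA.
by split; [exact: psd_mxtrace_ge0 | exact: psd_mxtrace_sqr_le].
Qed.

End PosdefProductTrace.

(** * Jacobi's formula *)

Section JacobiFormula.
Variables (R : realType) (t : R).

Lemma is_derive_big_sum (I : finType) (f : I -> R -> R) (df : I -> R) :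
  (forall i, is_derive t 1 (f i) (df i)) ->
  is_derive t 1 (fun s => \sum_i f i s) (\sum_i df i).
Proof.
move=> f_df; rewrite -fct_sumE.
by elim/big_ind2: _ => // *; [exact: is_derive_cst | exact: is_deriveD].
Qed.

Lemma is_derive_big_prod n (f : 'I_n -> R -> R) (df : 'I_n -> R) :
  (forall i, is_derive t 1 (f i) (df i)) ->
  is_derive t 1 (fun s => \prod_i f i s)
    (\sum_k \prod_i (if i == k then df i else f i t)).
Proof.
elim: n f df => [|n IH] f df f_df; rewrite -fct_prodE.
  by rewrite !big_ord0; exact: is_derive_cst.
have := IH _ _ (fun i => f_df (lift ord0 i)); rewrite -fct_prodE => IHf.
rewrite big_ord_recl; apply: is_derive_eq.
rewrite [RHS]big_ord_recl fct_prodE big_ord_recl eqxx [RHS]addrC.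
under [in X in _ = X + _]eq_bigr => k _ do rewrite big_ord_recl.
(* [lift ord0 i == lift ord0 k] reduces to [i == k] and [lift ord0 i == ord0] to [false]. *)
by rewrite -mulr_sumr; congr (_ + _); rewrite mulrC.
Qed.

Lemma expand_det_row_subst n (X Y : 'M[R]_n) k :
  \det (\matrix_(i, j) if i == k then Y i j else X i j) =
  \sum_j Y k j * cofactor X k j.
Proof.
rewrite (expand_det_row _ k); apply: eq_bigr => j _.
rewrite mxE eqxx /cofactor; congr (_ * (_ * \det _)).
by apply/matrixP => a b; rewrite !mxE eq_sym (negbTE (neq_lift _ _)).
Qed.

Lemma is_derive_det n (X : R -> 'M[R]_n) : mxderivable X t ->
  is_derive t 1 (fun s => \det (X s)) (\tr (mxderiv X t *m \adj (X t))).
Proof.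
move=> X_der; have X_df i j : is_derive t 1 (fun s => X s i j) (mxderiv X t i j).
  by rewrite mxE derive1E; apply: derivableP.
apply: is_derive_eq.
  apply: is_derive_big_sum => s; apply: is_deriveZ.
  exact: is_derive_big_prod (fun i => X_df i (s i)).
under eq_bigr => s _ do rewrite /= scaler_sumr.
rewrite exchange_big /mxtrace; apply: eq_bigr => k _.
rewrite mxE; under [RHS]eq_bigr => j _ do rewrite [\adj _ j k]mxE.
rewrite -expand_det_row_subst; apply: eq_bigr => s _; congr (_ * _).
by under [RHS]eq_bigr => i _ do rewrite mxE.
Qed.

Lemma derive1_lndet n (X : R -> 'M[R]_n) : mxderivable X t -> 0 < \det (X t) ->
  derive1 (fun s => ln (\det (X s))) t = \tr (invmx (X t) *m mxderiv X t).
Proof.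
move=> X_der det_gt0.
have lndet_df := is_derive1_comp (is_derive1_ln det_gt0) (is_derive_det X_der).
have [_ lndetE] := lndet_df; rewrite derive1E lndetE.
have X_unit : X t \in unitmx by rewrite unitmxE unitfE gt_eqF.
by rewrite /invmx X_unit -scalemxAl mxtraceZ mxtrace_mulC.
Qed.

End JacobiFormula.

Lemma ansatz2_rhsE (R : realType) m n (C : 'M[R]_n) (A : 'I_m -> 'M[R]_n) Xt :
  ansatz2_rhs C A Xt = - (kerproj_form (kron Xt Xt) (calA A) *m vec C).
Proof. by rewrite /ansatz2_rhs /kerproj_form mulmxBl mul1mx. Qed.

Section Ansatz2Bound.
Variables (R : rcfType) (m n : nat) (C Xt : 'M[R]_n) (cA : 'M[R]_(m, n * n)).
Hypotheses (C_pd : posdef C) (Xt_pd : posdef Xt).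
Hypothesis cA_tr_inj : forall y : 'cV[R]_m, cA^T *m y = 0 -> y = 0.

Let G := kron Xt Xt.
Let H := kerproj_form G cA.

Lemma bform_kron_vec_invmx : bform G (vec (invmx Xt)) (vec (invmx Xt)) = n%:R.
Proof.
have Xt_unit := posdef_unitmx Xt_pd.
rewrite /bform -mulmxA kron_vec Xt_pd.1 vec_dot trmx_inv Xt_pd.1.
by rewrite mulmxV // mul1mx mulVmx // mxtrace1.
Qed.

Lemma bform_kron_vec : bform G (vec C) (vec C) = \tr (C *m Xt *m C *m Xt).
Proof. by rewrite /bform -mulmxA kron_vec Xt_pd.1 vec_dot C_pd.1 !mulmxA. Qed.

Lemma kerproj_form_vec_bound :
  bform H (vec (invmx Xt)) (vec C) <= Num.sqrt n%:R * \tr (C *m Xt).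
Proof.
have G_pd : posdef G := posdef_kron Xt_pd.
have H_psd v : 0 <= bform H v v := kerproj_form_ge0 G_pd cA_tr_inj v.
set z := vec (invmx Xt); set c := vec C; set T := \tr (C *m Xt).
have [T_ge0 CXCX_le] := posdef_mxtrace_mul_bounds C_pd Xt_pd.
have z_le : bform H z z <= n%:R.
  by rewrite -bform_kron_vec_invmx; exact: kerproj_form_le.
have c_le : bform H c c <= T ^+ 2.
  by rewrite (le_trans _ CXCX_le) // -bform_kron_vec; exact: kerproj_form_le.
have zc_le : bform H z c ^+ 2 <= (Num.sqrt n%:R * T) ^+ 2.
  rewrite exprMn sqr_sqrtr //; apply: le_trans (ler_pM _ _ z_le c_le) => //.
  exact: bform_cauchy_schwarz (kerproj_form_sym cA G_pd) H_psd.
have := mulr_ge0 (sqrtr_ge0 n%:R) T_ge0; nra.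
Qed.

End Ansatz2Bound.

Theorem lemma5p1 (R : realType) (m n : nat) (C : 'M[R]_n) (A : 'I_m -> 'M[R]_n)
  (X : R -> 'M[R]_n) (t : R) :
  C^T = C ->
  (forall l, (A l)^T = A l) ->
  posdef C ->
  (forall c : 'I_m -> R, \sum_(l < m) c l *: A l = 0 -> forall l, c l = 0) ->
  mxderivable X t ->
  vec (mxderiv X t) = ansatz2_rhs C A (X t) ->
  posdef (X t) ->
  derive1 (fun s => ln (\det (X s))) t >= - Num.sqrt (n%:R) * \tr (C *m X t).
Proof.
(* Symmetry of [C] is part of [posdef C]. *)
move=> _ _ C_pd A_free X_der X_dyn X_pd.
rewrite derive1_lndet ?posdef_det_gt0 //.
have Z_sym : (invmx (X t))^T = invmx (X t) by rewrite trmx_inv X_pd.1.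
rewrite -Z_sym -vec_dot X_dyn ansatz2_rhsE mulmxN mxE mulNr lerN2 mulmxA.
exact: kerproj_form_vec_bound C_pd X_pd (calA_tr_inj A_free).
Qed.
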